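(* Let $H\in\mathbb{R}^{N\times n}$ and $Y\in\mathbb{R}^{N\times k}$ with $H^TH$ positive definite, let $c\ge 0$ be an integer, and let $R\in\mathbb{R}^{n\times n}$ be symmetric positive semidefinite with $\rho(F(R))<1$, where $F(R):=R(H^TH+R)^{-1}$ and $\rho$ denotes the spectral radius. Define the high-order regularization solution $$\hat\beta_{hr}=(H^TH+R)^{-1}\sum_{i=0}^{c}F(R)^i\,H^TY,$$ the optimal solution $\beta_{opt}=H^{\dagger}Y=(H^TH)^{-1}H^TY$, and the error $e_\beta=\hat\beta_{hr}-\beta_{opt}$. Then $$\lim_{R\to O}\|e_\beta\|=0\quad\text{and}\quad \lim_{R\to O}\left\|(H^TH+R)^{-1}F(R)H^TY\right\|=0,$$ where $O$ is the zero matrix and the limit is over symmetric positive semidefinite $R$, and, for fixed such $R$, $$\lim_{c\to+\infty}\|e_\beta\|=0.$$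
   Context: $\|\cdot\|$ denotes the 2-norm (spectral norm for matrices). $H^{\dagger}$ is the Moore–Penrose pseudo-inverse. $R$ is called the regularization matrix and $c$ the regularization order. *)

From HB Require Import structures.
From mathcomp Require Import all_boot all_order all_algebra.
From mathcomp Require Import complex.
From mathcomp Require Import all_classical all_reals.
From mathcomp Require Import topology normedtype sequences.
Set Implicit Arguments. Unset Strict Implicit. Unset Printing Implicit Defensive.
Import Order.TTheory GRing.Theory Num.Theory.
Local Open Scope ring_scope.
Local Open Scope classical_set_scope.

Definition vnorm {R : realType} {n : nat} (x : 'cV[R]_n) : R :=
  Num.sqrt (\sum_(i < n) x i 0 ^+ 2).

Definition specnorm {R : realType} {m n : nat} (A : 'M[R]_(m, n)) : R :=
  sup [set vnorm (A *m x) | x in [set x : 'cV[R]_n | vnorm x = 1]].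

Definition complexify {R : realType} {n : nat} (A : 'M[R]_n) : 'M[R[i]]_n :=
  map_mx (fun a : R => a%:C%C) A.

Definition spectral_radius {R : realType} {n : nat} (A : 'M[R]_n) : R :=
  sup [set Normc.normc z | z in [set z : R[i] | eigenvalue (complexify A) z]].

Definition is_sym {R : realType} {n : nat} (A : 'M[R]_n) : Prop := A^T = A.

Definition is_psd {R : realType} {n : nat} (A : 'M[R]_n) : Prop :=
  is_sym A /\ forall x : 'cV[R]_n, 0 <= (x^T *m A *m x) 0 0.

Definition is_pd {R : realType} {n : nat} (A : 'M[R]_n) : Prop :=
  is_sym A /\ forall x : 'cV[R]_n, x != 0 -> 0 < (x^T *m A *m x) 0 0.

Definition Fmat {R : realType} {N n : nat} (H : 'M[R]_(N, n)) (Rg : 'M[R]_n)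
  : 'M[R]_n := Rg *m invmx (H^T *m H + Rg).

Definition beta_hr {R : realType} {N n k : nat} (H : 'M[R]_(N, n))
  (Y : 'M[R]_(N, k)) (Rg : 'M[R]_n) (c : nat) : 'M[R]_(n, k) :=
  invmx (H^T *m H + Rg) *m
    (\sum_(i < c.+1) (Fmat H Rg ^+ i) *m (H^T *m Y)).

Definition beta_opt {R : realType} {N n k : nat} (H : 'M[R]_(N, n))
  (Y : 'M[R]_(N, k)) : 'M[R]_(n, k) :=
  invmx (H^T *m H) *m (H^T *m Y).

Definition e_beta {R : realType} {N n k : nat} (H : 'M[R]_(N, n))
  (Y : 'M[R]_(N, k)) (Rg : 'M[R]_n) (c : nat) : 'M[R]_(n, k) :=
  beta_hr H Y Rg c - beta_opt H Y.

(* Write A = H^T H, M = A + R and F = R M^-1.  Since A M^-1 = 1 - F, the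
   telescoping identity (1 - F) (\sum_(i <= c) F^i) = 1 - F^(c+1) gives
   e_beta = - A^-1 F^(c+1) H^T Y.  As M >= A in the Loewner order,
   |M^-1| <= |A^-1|, hence |F| <= |R| |A^-1|, and both limits as R -> O follow
   from bounds linear in |R|.  For fixed R, F is a strict contraction for the
   quadratic form of M^-1: with x = M y one has (F x)^T M^-1 (F x) <= y^T R y
   = x^T M^-1 x - y^T A y, and y^T A y is at least a fixed fraction of
   y^T M y = x^T M^-1 x.  So |F^j| decays geometrically and e_beta -> 0 as
   c -> oo. *)

From Pilot Require Import Defs.
From HB Require Import structures.
From mathcomp Require Import all_boot all_order all_algebra.
From mathcomp Require Import complex.
From mathcomp Require Import all_classical all_reals.
From mathcomp Require Import topology normedtype sequences.
From mathcomp Require Import lra ring.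
Import Order.TTheory GRing.Theory Num.Theory.
Import numFieldNormedType.Exports.
Local Open Scope ring_scope.
Local Open Scope classical_set_scope.
Set Implicit Arguments. Unset Strict Implicit. Unset Printing Implicit Defensive.

Section RegularizedLeastSquares.
Variable R : realType.
Implicit Types (a b c t : R).

Definition dotmx n (x y : 'cV[R]_n) : R := (x^T *m y) 0 0.

Definition bilform n (P : 'M[R]_n) (x y : 'cV[R]_n) : R := (x^T *m P *m y) 0 0.

Lemma bilformE n (P : 'M[R]_n) x y : bilform P x y = dotmx x (P *m y).
Proof. by rewrite /bilform /dotmx mulmxA. Qed.

Lemma bilform1 n (x y : 'cV[R]_n) : bilform 1%:M x y = dotmx x y.
Proof. by rewrite bilformE mul1mx. Qed.

Lemma bilformDm n (P Q : 'M[R]_n) x y :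
  bilform (P + Q) x y = bilform P x y + bilform Q x y.
Proof. by rewrite /bilform mulmxDr mulmxDl mxE. Qed.

Lemma bilformC n (P : 'M[R]_n) x y : Defs.is_sym P -> bilform P y x = bilform P x y.
Proof.
move=> sP; rewrite /bilform.
have -> : (y^T *m P *m x) 0 0 = (y^T *m P *m x)^T 0 0 by rewrite [RHS]mxE.
by rewrite !trmx_mul trmxK sP mulmxA.
Qed.

Lemma bilform_expand n (P : 'M[R]_n) x y t : Defs.is_sym P ->
  bilform P (x + t *: y) (x + t *: y)
  = bilform P y y * t ^+ 2 + 2 * bilform P x y * t + bilform P x x.
Proof.
move=> sP; have yx_xy := bilformC x y sP; rewrite /bilform !mxE in yx_xy.
rewrite /bilform [(x + _)^T]linearD /= [(t *: y)^T]linearZ /= !mulmxDl !mulmxDr.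
by rewrite -!scalemxAl -!scalemxAr !mxE yx_xy; ring.
Qed.

Lemma quadratic_ge0_discr a b c : 0 <= a ->
  (forall t, 0 <= a * t ^+ 2 + 2 * b * t + c) -> b ^+ 2 <= a * c.
Proof.
move=> a_ge0 q_ge0; have [a_gt0|] := ltrP 0 a.
  have := q_ge0 (- b / a).
  have -> : a * (- b / a) ^+ 2 + 2 * b * (- b / a) + c = c - b ^+ 2 / a.
    by field; rewrite gt_eqF.
  by rewrite subr_ge0 ler_pdivrMr // mulrC.
move=> a_le0; have a0 : a = 0 by apply/eqP; rewrite eq_le a_le0 a_ge0.
subst a.
have [-> | b_neq0] := eqVneq b 0; first by rewrite expr0n mul0r.
(* a linear function with nonzero slope takes negative values *)
have := q_ge0 (- (c + 1) / (2 * b)).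
have -> : 0 * (- (c + 1) / (2 * b)) ^+ 2 + 2 * b * (- (c + 1) / (2 * b)) + c = -1.
  by field.
lra.
Qed.

Lemma le_of_sqr_le_mul a c : 0 <= a -> 0 <= c -> a ^+ 2 <= a * c -> a <= c.
Proof.
move=> a_ge0 c_ge0; have [->|a_neq0] := eqVneq a 0; first by [].
have a_gt0 : 0 < a by rewrite lt_def a_neq0.
by rewrite expr2 ler_pM2l.
Qed.

Lemma psd_CauchySchwarz n (P : 'M[R]_n) x y : is_psd P ->
  bilform P x y ^+ 2 <= bilform P x x * bilform P y y.
Proof.
move=> [sP P_ge0]; rewrite mulrC; apply: quadratic_ge0_discr => [|t].
  exact: P_ge0.
by rewrite -bilform_expand //; apply: P_ge0.
Qed.

Lemma dotmx_self n (x : 'cV[R]_n) : dotmx x x = \sum_i x i 0 ^+ 2.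
Proof. by rewrite /dotmx mxE; apply: eq_bigr => i _; rewrite mxE expr2. Qed.

Lemma sqr_vnorm n (x : 'cV[R]_n) : vnorm x ^+ 2 = dotmx x x.
Proof. by rewrite dotmx_self sqr_sqrtr // sumr_ge0 // => i _; rewrite sqr_ge0. Qed.

Lemma vnorm_ge0 n (x : 'cV[R]_n) : 0 <= vnorm x.
Proof. exact: sqrtr_ge0. Qed.

Lemma vnormZ n a (x : 'cV[R]_n) : vnorm (a *: x) = `|a| * vnorm x.
Proof.
rewrite /vnorm -sqrtr_sqr -sqrtrM ?sqr_ge0 // mulr_sumr.
by congr Num.sqrt; apply: eq_bigr => i _; rewrite mxE exprMn.
Qed.

Lemma vnormN n (x : 'cV[R]_n) : vnorm (- x) = vnorm x.
Proof. by rewrite -scaleN1r vnormZ normrN1 mul1r. Qed.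

Lemma psd1 n : is_psd (1%:M : 'M[R]_n).
Proof.
split=> [|x]; first by rewrite /Defs.is_sym trmx1.
by rewrite -/(bilform _ x x) bilform1 -sqr_vnorm sqr_ge0.
Qed.

Lemma dotmx_CauchySchwarz n (x y : 'cV[R]_n) : `|dotmx x y| <= vnorm x * vnorm y.
Proof.
rewrite -ler_sqr ?nnegrE ?mulr_ge0 ?vnorm_ge0 // real_normK ?num_real //.
by rewrite exprMn !sqr_vnorm -!bilform1; apply/psd_CauchySchwarz/psd1.
Qed.

Lemma mulmx_colE m n (P : 'M[R]_(m, n)) x i : (P *m x) i 0 = dotmx (row i P)^T x.
Proof. by rewrite /dotmx trmxK -row_mul [RHS]mxE. Qed.

Lemma vnorm_mulmx_frobenius m n (P : 'M[R]_(m, n)) x :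
  vnorm (P *m x) ^+ 2 <= (\sum_i vnorm (row i P)^T ^+ 2) * vnorm x ^+ 2.
Proof.
rewrite sqr_vnorm dotmx_self mulr_suml; apply: ler_sum => i _.
rewrite mulmx_colE -exprMn -real_normK ?num_real //.
by rewrite ler_sqr ?nnegrE ?mulr_ge0 ?vnorm_ge0 // dotmx_CauchySchwarz.
Qed.

Let unit_images m n (P : 'M[R]_(m, n)) :=
  [set vnorm (P *m x) | x in [set x : 'cV[R]_n | vnorm x = 1]].

Lemma specnorm_ub m n (P : 'M[R]_(m, n)) : has_ubound (unit_images P).
Proof.
exists (Num.sqrt (\sum_i vnorm (row i P)^T ^+ 2)) => _ [x /= x1 <-].
rewrite -(ger0_norm (vnorm_ge0 (P *m x))) -sqrtr_sqr ler_sqrt; last first.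
  by apply: sumr_ge0 => i _; rewrite sqr_ge0.
by have := vnorm_mulmx_frobenius P x; rewrite x1 expr1n mulr1.
Qed.

Lemma specnorm_ge0 m n (P : 'M[R]_(m, n)) : 0 <= specnorm P.
Proof.
rewrite /specnorm -/(unit_images P).
have [->|/set0P[z Sz]] := eqVneq (unit_images P) set0; first by rewrite sup0.
apply: le_trans (ub_le_sup (specnorm_ub P) Sz).
by case: Sz => x _ <-; apply: vnorm_ge0.
Qed.

Lemma specnorm_le m n (P : 'M[R]_(m, n)) K : 0 <= K ->
  (forall x, vnorm (P *m x) <= K * vnorm x) -> specnorm P <= K.
Proof.
move=> K_ge0 PK; rewrite /specnorm -/(unit_images P).
have [->|/set0P ne] := eqVneq (unit_images P) set0; first by rewrite sup0.
by apply: ge_sup => // _ [x /= x1 <-]; rewrite -[K]mulr1 -x1.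
Qed.

Lemma vnorm_mulmx_le m n (P : 'M[R]_(m, n)) x : vnorm (P *m x) <= specnorm P * vnorm x.
Proof.
have [x0|x_neq0] := eqVneq (vnorm x) 0.
  rewrite x0 mulr0 -(ler_sqr (vnorm_ge0 _)) ?nnegrE // expr0n /=.
  by have := vnorm_mulmx_frobenius P x; rewrite x0 expr0n /= mulr0.
have x_gt0 : 0 < vnorm x by rewrite lt_def x_neq0 vnorm_ge0.
rewrite -ler_pdivrMr // mulrC -[(vnorm x)^-1]ger0_norm ?invr_ge0 ?vnorm_ge0 //.
rewrite -vnormZ scalemxAr; apply: (ub_le_sup (specnorm_ub P)).
exists ((vnorm x)^-1 *: x) => //=.
by rewrite vnormZ ger0_norm ?invr_ge0 ?vnorm_ge0 // mulVf.
Qed.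

Lemma specnormM m n p (P : 'M[R]_(m, n)) (Q : 'M[R]_(n, p)) :
  specnorm (P *m Q) <= specnorm P * specnorm Q.
Proof.
apply: specnorm_le => [|x]; first by rewrite mulr_ge0 ?specnorm_ge0.
rewrite -mulmxA -mulrA; apply: le_trans (vnorm_mulmx_le _ _) _.
by rewrite ler_wpM2l ?specnorm_ge0 ?vnorm_mulmx_le.
Qed.

Lemma specnormN m n (P : 'M[R]_(m, n)) : specnorm (- P) <= specnorm P.
Proof.
by apply: specnorm_le (specnorm_ge0 _) _ => x; rewrite mulNmx vnormN vnorm_mulmx_le.
Qed.

Lemma specnormX n (P : 'M[R]_n) j : specnorm (P ^+ j) <= specnorm P ^+ j.
Proof.
elim: j => [|j IHj].
  by rewrite expr0 -idmxE; apply: specnorm_le ler01 _ => x; rewrite mul1mx mul1r.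
rewrite !exprS -mulmxE; apply: le_trans (specnormM _ _) _.
by rewrite ler_wpM2l ?specnorm_ge0.
Qed.

Lemma bilform_le_specnorm n (P : 'M[R]_n) x : bilform P x x <= specnorm P * vnorm x ^+ 2.
Proof.
rewrite bilformE; apply: le_trans (ler_norm _) _.
apply: le_trans (dotmx_CauchySchwarz _ _) _.
by rewrite mulrC expr2 mulrA ler_wpM2r ?vnorm_ge0 ?vnorm_mulmx_le.
Qed.

Lemma is_sym_invmx n (P : 'M[R]_n) : Defs.is_sym P -> Defs.is_sym (invmx P).
Proof. by move=> sP; rewrite /Defs.is_sym trmx_inv sP. Qed.

Lemma bilform_invmx n (P : 'M[R]_n) x y : Defs.is_sym P -> P \in unitmx ->
  bilform P (invmx P *m x) (invmx P *m y) = bilform (invmx P) x y.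
Proof.
by move=> sP uP; rewrite /bilform trmx_mul trmx_inv sP mulmxKV // mulmxA.
Qed.

Lemma pd_unitmx n (P : 'M[R]_n) : is_pd P -> P \in unitmx.
Proof.
move=> [sP P_gt0]; rewrite unitmxE unitfE; apply/negP => /det0P[v v_neq0 vP].
have vT_neq0 : v^T != 0 by rewrite -trmx0 (inj_eq trmx_inj).
have := P_gt0 _ vT_neq0; rewrite trmxK -mulmxA.
by rewrite -[P *m _]trmxK trmx_mul trmxK sP vP trmx0 mulmx0 mxE ltxx.
Qed.

Lemma pd_psd n (P : 'M[R]_n) : is_pd P -> is_psd P.
Proof.
move=> [sP P_gt0]; split=> // x; have [->|x_neq0] := eqVneq x 0.
  by rewrite mulmx0 mxE.
exact/ltW/P_gt0.
Qed.

Lemma pd_add_psd n (P Q : 'M[R]_n) : is_pd P -> is_psd Q -> is_pd (P + Q).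
Proof.
move=> [sP P_gt0] [sQ Q_ge0]; split; first by rewrite /Defs.is_sym linearD /= sP sQ.
move=> x x_neq0; rewrite -/(bilform _ x x) bilformDm.
exact: ltr_wpDr (Q_ge0 x) (P_gt0 x x_neq0).
Qed.

Lemma psd_invmx n (P : 'M[R]_n) : is_pd P -> is_psd (invmx P).
Proof.
move=> pdP; have [sP _] := pdP; split=> [|x]; first exact: is_sym_invmx.
rewrite -/(bilform _ x x) -bilform_invmx ?pd_unitmx //.
by case: (pd_psd pdP) => _; apply.
Qed.

Lemma sqr_vnorm_le_bilform n (P : 'M[R]_n) x : is_psd P -> P \in unitmx ->
  vnorm x ^+ 2 <= specnorm (invmx P) * bilform P x x.
Proof.
move=> psdP uP; have [sP P_ge0] := psdP; set y := invmx P *m x.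
have xPy : bilform P x y = vnorm x ^+ 2 by rewrite bilformE mulKVmx // sqr_vnorm.
have yPy : bilform P y y <= specnorm (invmx P) * vnorm x ^+ 2.
  by rewrite bilform_invmx ?bilform_le_specnorm.
apply: le_of_sqr_le_mul; rewrite ?sqr_ge0 ?mulr_ge0 ?specnorm_ge0 //; first exact: P_ge0.
rewrite -{1}xPy; apply: le_trans (psd_CauchySchwarz x y psdP) _.
rewrite [X in _ <= X](_ : _ = bilform P x x * (specnorm (invmx P) * vnorm x ^+ 2)).
  by rewrite ler_wpM2l //; exact: P_ge0.
by rewrite mulrC mulrA [_ * bilform P x x]mulrC.
Qed.

Lemma bilform_invmx_le n (P Q : 'M[R]_n) y : is_psd P -> is_pd Q ->
  (forall z, bilform P z z <= bilform Q z z) ->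
  bilform (invmx Q) (P *m y) (P *m y) <= bilform P y y.
Proof.
move=> psdP pdQ PleQ; have [sP P_ge0] := psdP; have [sQ _] := pdQ.
set w := invmx Q *m (P *m y).
have -> : bilform (invmx Q) (P *m y) (P *m y) = bilform P y w.
  by rewrite /bilform trmx_mul sP !mulmxA.
have wQw : bilform Q w w = bilform P y w.
  by rewrite bilformE mulKVmx ?pd_unitmx // -bilformE bilformC.
have wPw_le : bilform P w w <= bilform P y w by rewrite -wQw PleQ.
apply: le_of_sqr_le_mul; first by rewrite -wQw; case: (pd_psd pdQ) => _; apply.
  exact: P_ge0.
apply: le_trans (psd_CauchySchwarz y w psdP) _.
by rewrite mulrC ler_wpM2r //; exact: P_ge0.
Qed.

Section ShiftedInverse.
Variables (n : nat) (A B : 'M[R]_n).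
Hypotheses (pdA : is_pd A) (psdB : is_psd B).

Local Notation F := (B *m invmx (A + B)).

(* y^T A y >= y^T M y / (|M| |A^-1|) for M = A + B; the [+ 1] keeps the rate
   well defined when that product vanishes. *)
Definition contraction_rate : R :=
  1 - (specnorm (A + B) * specnorm (invmx A) + 1)^-1.

Lemma contraction_rate_ge0 : 0 <= contraction_rate.
Proof.
rewrite subr_ge0 invf_le1 ?lerDr ?mulr_ge0 ?specnorm_ge0 //.
by rewrite ltr_wpDl ?mulr_ge0 ?specnorm_ge0.
Qed.

Lemma contraction_rate_lt1 : contraction_rate < 1.
Proof. by rewrite ltrBlDr ltrDl invr_gt0 ltr_wpDl ?mulr_ge0 ?specnorm_ge0. Qed.

Lemma specnorm_invmx_add : specnorm (invmx (A + B)) <= specnorm (invmx A).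
Proof.
have uM := pd_unitmx (pd_add_psd pdA psdB); have [_ B_ge0] := psdB.
apply: specnorm_le (specnorm_ge0 _) _ => y; set z := invmx (A + B) *m y.
have zMz : bilform (A + B) z z = dotmx z y by rewrite bilformE mulKVmx.
apply: le_of_sqr_le_mul; rewrite ?mulr_ge0 ?vnorm_ge0 ?specnorm_ge0 //.
apply: le_trans (sqr_vnorm_le_bilform z (pd_psd pdA) (pd_unitmx pdA)) _.
rewrite mulrCA ler_wpM2l ?specnorm_ge0 //.
apply: le_trans (le_trans (ler_norm _) (dotmx_CauchySchwarz z y)).
by rewrite -zMz bilformDm lerDl; apply: B_ge0.
Qed.

Lemma specnorm_shifted_le : specnorm F <= specnorm B * specnorm (invmx A).
Proof.
apply: le_trans (specnormM _ _) _.
by rewrite ler_wpM2l ?specnorm_ge0 ?specnorm_invmx_add.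
Qed.

Lemma shifted_contraction x :
  bilform (invmx (A + B)) (F *m x) (F *m x)
  <= contraction_rate * bilform (invmx (A + B)) x x.
Proof.
have pdM := pd_add_psd pdA psdB; have [sM _] := pdM; have uM := pd_unitmx pdM.
have [_ A_ge0] := pd_psd pdA; have [_ B_ge0] := psdB.
set y := invmx (A + B) *m x.
have -> : bilform (invmx (A + B)) x x = bilform (A + B) y y by rewrite bilform_invmx.
rewrite -mulmxA -/y bilformDm.
have BleM z : bilform B z z <= bilform (A + B) z z by rewrite bilformDm lerDr; apply: A_ge0.
apply: le_trans (bilform_invmx_le y psdB pdM BleM) _.
have MleA : bilform (A + B) y y <= specnorm (A + B) * specnorm (invmx A) * bilform A y y.
  apply: le_trans (bilform_le_specnorm _ y) _; rewrite -mulrA ler_wpM2l ?specnorm_ge0 //.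
  exact: sqr_vnorm_le_bilform (pd_psd pdA) (pd_unitmx pdA).
rewrite bilformDm /contraction_rate in MleA *.
set k := _ * specnorm (invmx A) in MleA *; set a := bilform A y y in MleA *.
have k1_gt0 : 0 < k + 1 by rewrite ltr_wpDl ?mulr_ge0 ?specnorm_ge0.
have : (k + 1)^-1 * (a + bilform B y y) <= a.
  rewrite ler_pdivrMl // mulrDl mul1r; apply: le_trans MleA _.
  by rewrite lerDl; apply: A_ge0.
lra.
Qed.

Lemma shifted_contractionX j x :
  bilform (invmx (A + B)) (F ^+ j *m x) (F ^+ j *m x)
  <= contraction_rate ^+ j * bilform (invmx (A + B)) x x.
Proof.
elim: j => [|j IHj]; first by rewrite expr0 -idmxE mul1mx mul1r.
rewrite [F ^+ j.+1]exprS -mulmxE -mulmxA exprS -mulrA.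
apply: le_trans (shifted_contraction _) _.
by rewrite ler_wpM2l ?contraction_rate_ge0.
Qed.

Lemma specnorm_shiftedX j :
  specnorm (F ^+ j)
  <= Num.sqrt (specnorm (A + B) * specnorm (invmx (A + B)))
     * Num.sqrt contraction_rate ^+ j.
Proof.
have pdM := pd_add_psd pdA psdB; have [sM _] := pdM; have uM := pd_unitmx pdM.
have q_ge0 := contraction_rate_ge0.
apply: specnorm_le => [|x]; first by rewrite mulr_ge0 ?exprn_ge0 ?sqrtr_ge0.
rewrite -ler_sqr ?nnegrE ?mulr_ge0 ?exprn_ge0 ?sqrtr_ge0 ?vnorm_ge0 //.
rewrite !exprMn [Num.sqrt (_ * _) ^+ 2]sqr_sqrtr ?mulr_ge0 ?specnorm_ge0 //.
rewrite exprAC [Num.sqrt contraction_rate ^+ 2]sqr_sqrtr //.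
have := sqr_vnorm_le_bilform (F ^+ j *m x) (psd_invmx pdM); rewrite unitmx_inv invmxK.
move=> /(_ uM) /le_trans; apply; rewrite -!mulrA ler_wpM2l ?specnorm_ge0 //.
apply: le_trans (shifted_contractionX _ _) _; rewrite mulrCA ler_wpM2l ?exprn_ge0 //.
exact: bilform_le_specnorm.
Qed.

Lemma specnorm_shiftedX_small j : specnorm B * specnorm (invmx A) <= 1 ->
  specnorm (F ^+ j.+1) <= specnorm B * specnorm (invmx A).
Proof.
move=> small; apply: le_trans (specnormX _ _) (le_trans _ specnorm_shifted_le).
rewrite exprS -[X in _ <= X]mulr1 ler_wpM2l ?specnorm_ge0 // exprn_ile1 ?specnorm_ge0 //.
exact: le_trans specnorm_shifted_le small.
Qed.

End ShiftedInverse.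

Lemma lim0_of_linear_bound (T : Type) (P : T -> Prop) (s g : T -> R) (C r0 : R) :
  0 <= C -> 0 < r0 -> (forall x, 0 <= s x) ->
  (forall x, P x -> s x < r0 -> g x <= C * s x) ->
  forall eps, 0 < eps ->
  exists2 delta, 0 < delta & forall x, P x -> s x < delta -> g x < eps.
Proof.
move=> C_ge0 r0_gt0 s_ge0 g_le eps eps_gt0.
have C1_gt0 : 0 < C + 1 by rewrite ltr_wpDl.
exists (Num.min r0 (eps / (C + 1))); first by rewrite lt_min r0_gt0 divr_gt0.
move=> x Px; rewrite lt_min => /andP[s_lt_r0 s_lt_eps].
apply: le_lt_trans (g_le x Px s_lt_r0) _.
apply: le_lt_trans (_ : C * s x <= (C + 1) * s x) _; first by rewrite ler_wpM2r ?lerDl.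
by rewrite mulrC -ltr_pdivlMr.
Qed.

Lemma cvg0_of_geometric_bound (u : nat -> R) (C r : R) : 0 <= r -> r < 1 ->
  (forall j, 0 <= u j <= C * r ^+ j) -> u @ \oo --> 0.
Proof.
move=> r_ge0 r_lt1 u_bnd; apply: (@squeeze_cvgr _ _ _ _ (cst 0) (fun j => C * r ^+ j)).
- exact: nearW.
- exact: cvg_cst.
- by rewrite -(mulr0 C); apply: cvgM; [exact: cvg_cst | apply: cvg_expr; rewrite ger0_norm].
Qed.

Section HighOrderRegularization.
Variables (N n k : nat) (H : 'M[R]_(N, n)) (Y : 'M[R]_(N, k)).
Hypothesis pdA : is_pd (H^T *m H).

Local Notation A := (H^T *m H).
Local Notation HY := (H^T *m Y).
Local Notation normAinv := (specnorm (invmx (H^T *m H))).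

Lemma e_betaE Rg (c : nat) : is_psd Rg ->
  e_beta H Y Rg c = - (invmx A *m (Fmat H Rg ^+ c.+1 *m HY)).
Proof.
move=> psdR; have uA := pd_unitmx pdA; have uM := pd_unitmx (pd_add_psd pdA psdR).
rewrite /e_beta /beta_hr /beta_opt -mulmx_suml; set F := Fmat H Rg.
have AF : A *m invmx (A + Rg) = 1 - F.
  by apply/eqP; rewrite eq_sym subr_eq addrC -mulmxDl addrC mulmxV // idmxE.
rewrite (mulmxA (invmx (A + Rg))) [invmx (A + Rg) *m _](_ : _ = invmx A *m (1 - F ^+ c.+1)).
  by rewrite -mulmxA mulmxBl mul1mx mulmxBr addrAC subrr add0r.
rewrite -[in RHS]opprB subrX1 -mulNr opprB -AF -mulmxE.
by rewrite mulmxA mulKmx.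
Qed.

Lemma specnorm_e_beta_le Rg (c : nat) : is_psd Rg ->
  specnorm (e_beta H Y Rg c) <= normAinv * specnorm (Fmat H Rg ^+ c.+1) * specnorm HY.
Proof.
move=> psdR; rewrite e_betaE //; apply: le_trans (specnormN _) _.
apply: le_trans (specnormM _ _) _; rewrite -mulrA ler_wpM2l ?specnorm_ge0 //.
exact: specnormM.
Qed.

Lemma specnorm_e_beta_small_reg Rg (c : nat) :
  is_psd Rg -> specnorm Rg < (normAinv + 1)^-1 ->
  specnorm (e_beta H Y Rg c) <= normAinv ^+ 2 * specnorm HY * specnorm Rg.
Proof.
move=> psdR small; apply: le_trans (specnorm_e_beta_le _ psdR) _.
have [Ai_ge0 sR_ge0] : 0 <= normAinv /\ 0 <= specnorm Rg by split; apply: specnorm_ge0.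
have sRa_le1 : specnorm Rg * normAinv <= 1.
  by move: small; rewrite -div1r ltr_pdivlMr ?ltr_wpDl //; nra.
rewrite (_ : normAinv ^+ 2 * _ * _ = normAinv * (specnorm Rg * normAinv) * specnorm HY);
  last by ring.
by apply/ler_wpM2r/ler_wpM2l/specnorm_shiftedX_small; rewrite ?specnorm_ge0.
Qed.

Lemma specnorm_first_correction_le Rg : is_psd Rg ->
  specnorm (invmx (A + Rg) *m Fmat H Rg *m HY) <= normAinv ^+ 2 * specnorm HY * specnorm Rg.
Proof.
move=> psdR; apply: le_trans (specnormM _ _) _.
rewrite (_ : normAinv ^+ 2 * _ * _ = normAinv * (specnorm Rg * normAinv) * specnorm HY);
  last by ring.
apply/ler_wpM2r; first exact: specnorm_ge0.
apply: le_trans (specnormM _ _) _.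
by apply: ler_pM; rewrite ?specnorm_ge0 ?specnorm_invmx_add ?specnorm_shifted_le.
Qed.

Lemma e_beta_cvg0 Rg : is_psd Rg ->
  (fun c : nat => specnorm (e_beta H Y Rg c)) @ \oo --> 0.
Proof.
move=> psdR; set r := Num.sqrt (contraction_rate A Rg).
set K := Num.sqrt (specnorm (A + Rg) * specnorm (invmx (A + Rg))).
apply: (cvg0_of_geometric_bound (C := normAinv * K * r * specnorm HY) (r := r)).
- exact: sqrtr_ge0.
- by rewrite -sqrtr1 ltr_sqrt ?contraction_rate_lt1.
move=> c; rewrite specnorm_ge0 /=; apply: le_trans (specnorm_e_beta_le _ psdR) _.
rewrite (_ : _ * r ^+ c = normAinv * (K * r ^+ c.+1) * specnorm HY);
  last by rewrite exprS; ring.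
by apply/ler_wpM2r/ler_wpM2l/specnorm_shiftedX; rewrite ?specnorm_ge0.
Qed.

End HighOrderRegularization.

End RegularizedLeastSquares.

Theorem theorem1 (R : realType) (N n k : nat)
  (H : 'M[R]_(N, n)) (Y : 'M[R]_(N, k)) (c : nat) :
  is_pd (H^T *m H) ->
  (* lim_{R -> O, R sym. PSD} ||e_beta|| = 0 *)
  (forall eps : R, 0 < eps -> exists2 delta : R, 0 < delta &
     forall Rg : 'M[R]_n, is_psd Rg -> specnorm Rg < delta ->
       specnorm (e_beta H Y Rg c) < eps) /\
  (* lim_{R -> O, R sym. PSD} ||(H^T H + R)^{-1} F(R) H^T Y|| = 0 *)
  (forall eps : R, 0 < eps -> exists2 delta : R, 0 < delta &
     forall Rg : 'M[R]_n, is_psd Rg -> specnorm Rg < delta ->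
       specnorm (invmx (H^T *m H + Rg) *m Fmat H Rg *m (H^T *m Y)) < eps) /\
  (* for fixed sym. PSD R with rho(F(R)) < 1: lim_{c -> oo} ||e_beta|| = 0 *)
  (forall Rg : 'M[R]_n, is_psd Rg -> spectral_radius (Fmat H Rg) < 1 ->
     (fun c' : nat => specnorm (e_beta H Y Rg c')) @ \oo --> (0 : R)).
Proof.
move=> pdA; set a := specnorm (invmx (H^T *m H)).
have [a_ge0 HY_ge0] : 0 <= a /\ 0 <= specnorm (H^T *m Y) by split; apply: specnorm_ge0.
have C_ge0 : 0 <= a ^+ 2 * specnorm (H^T *m Y) by rewrite mulr_ge0 ?sqr_ge0.
split; [|split].
- apply: (lim0_of_linear_bound C_ge0 (r0 := (a + 1)^-1)).
  + by rewrite invr_gt0 ltr_wpDl.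
  + exact: specnorm_ge0.
  by move=> Rg psdR; apply: specnorm_e_beta_small_reg.
- apply: (lim0_of_linear_bound C_ge0 ltr01); first exact: specnorm_ge0.
  by move=> Rg psdR _; apply: specnorm_first_correction_le.
-
  by move=> Rg psdR _; apply: e_beta_cvg0.
Qed.
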